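(* Let $X$ be a topological space, $\mathcal{F}$ a filter base on $X$ stable under countable intersections, and $K\subseteq X$ compact. If $\mathcal{F}\vee G_\delta(K):=\{F_0\cap F_1: F_0,F_1\in\mathcal{F}\cup G_\delta(K)\}$ is a filter base, then it is a total filter base stable under countable intersections.
   Context: A filter base on $X$ is a nonempty $\mathcal{F}\subseteq\mathcal{P}(X)$ with $\emptyset\notin\mathcal{F}$ and closed under pairwise intersections; it is stable under countable intersections if for every countable $S\subseteq\mathcal{F}$ there is $H\in\mathcal{F}$ with $H\subseteq\bigcap S$. $G_\delta(K)=\{G\subseteq X: K\subseteq G,\ G\text{ is a countable intersection of open subsets of }X\}$. $ad(\mathcal{F})=\bigcap\{\overline{F}:F\in\mathcal{F}\}$; $\mathcal{F}$ is total if every filter base $\mathcal{H}\supseteq\mathcal{F}$ satisfies $ad(\mathcal{H})\neq\emptyset$. *)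

From HB Require Import structures.
From mathcomp Require Import all_boot all_order.
From mathcomp Require Import all_classical topology.
Set Implicit Arguments. Unset Strict Implicit. Unset Printing Implicit Defensive.
Local Open Scope classical_set_scope.

Section Defs.
Context {X : topologicalType}.

Definition is_filter_base (F : set (set X)) : Prop :=
  F !=set0 /\ ~ F set0 /\ (forall A B, F A -> F B -> F (A `&` B)).

Definition countably_stable (F : set (set X)) : Prop :=
  forall S : set (set X), S `<=` F -> countable S ->
    exists H, F H /\ H `<=` \bigcap_(A in S) A.

Definition Gdelta (K : set X) : set (set X) :=
  [set G | K `<=` G /\
     exists U : set (set X), countable U /\ U `<=` open /\ G = \bigcap_(V in U) V].

Definition fjoin (F G : set (set X)) : set (set X) :=
  [set A | exists F0 F1, (F `|` G) F0 /\ (F `|` G) F1 /\ A = F0 `&` F1].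

Definition ad (F : set (set X)) : set X := \bigcap_(A in F) closure A.

Definition total_fbase (F : set (set X)) : Prop :=
  forall H : set (set X), is_filter_base H -> F `<=` H -> ad H !=set0.

End Defs.

From mathcomp Require Import all_boot all_order.
From mathcomp Require Import all_classical topology.
Local Open Scope classical_set_scope.

(* Let J := F v G_delta(K).  Both conclusions hold for reasons that do not
   use the hypothesis that J is a filter base.
   - Countable stability.  G_delta(K) is closed under countable
     intersections, and every member of J contains a set P `&` G with
     P in F and G in G_delta(K).  Given countably many members of J, the
     countably many P's lie above a single member of F (stability of F)
     and the countably many G's intersect to a member of G_delta(K); the
     intersection of these two sets is in J and lies below all of them.
   - Totality.  Every open set containing K belongs to G_delta(K), hence
     to J and to any filter base H above J.  For such an H, the sets K \ U,
     with U open and disjoint from a member of H, form a proper filter base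
     containing K; a cluster point of it in the compact K is adherent to
     every member of H. *)

Section GdeltaJoin.
Set Implicit Arguments.
Unset Strict Implicit.
Context {X : topologicalType}.
Implicit Types (K : set X) (F G H : set (set X)).

Lemma Gdelta_open K (U : set X) : open U -> K `<=` U -> Gdelta K U.
Proof.
move=> oU KU; split=> //; exists [set U]; split; first exact: countable1.
by split; [move=> V ->|rewrite bigcap_set1].
Qed.

(* G_delta(K) is closed under countable (indexed) intersections: the
   intersection of the countably many countable families of open sets is
   taken over their countable union. *)
Lemma Gdelta_bigcap K I (D : set I) (G : I -> set X) :
  countable D -> (forall i, D i -> Gdelta K (G i)) ->
  Gdelta K (\bigcap_(i in D) G i).
Proof.
move=> cD GdG.
have /choice [U hU] : forall i, exists U : set (set X), D i ->
    countable U /\ U `<=` open /\ G i = \bigcap_(V in U) V.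
  move=> i; have [Di|nDi] := pselect (D i); last by exists set0.
  by have [_ [U hU]] := GdG i Di; exists U.
split=> [x Kx i Di|]; first by have [KG _] := GdG i Di; exact: KG.
exists (\bigcup_(i in D) U i); split.
  by apply: bigcup_countable => // i /hU [].
split; first by move=> V [i Di]; have [_ [oU _]] := hU i Di; exact: oU.
rewrite predeqE => x; split.
  move=> Gx V [i Di UV]; have [_ [_ GiE]] := hU i Di.
  by have := Gx i Di; rewrite GiE; apply.
move=> Wx i Di; have [_ [_ ->]] := hU i Di.
by move=> V UV; apply: Wx; exists i.
Qed.

Lemma Gdelta_setT K : Gdelta K setT.
Proof. by rewrite -(bigcap_set0 id); apply: Gdelta_bigcap. Qed.

Lemma Gdelta_setI K (A B : set X) :
  Gdelta K A -> Gdelta K B -> Gdelta K (A `&` B).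
Proof.
move=> GA GB; have -> : A `&` B = \bigcap_(C in [set A; B]) C.
  by rewrite bigcap_setU1 bigcap_set1.
apply: Gdelta_bigcap => [|C [->|->]] //.
exact/finite_set_countable/finite_set2.
Qed.

Lemma fjoin_setI F G (A B : set X) : F A -> G B -> fjoin F G (A `&` B).
Proof. by move=> FA GB; exists A, B; split; [left|split; [right|]]. Qed.

Lemma sub_fjoinr F G : G `<=` fjoin F G.
Proof.
by move=> A GA; exists A, A; rewrite setIid; split; [right|split; [right|]].
Qed.

Lemma fjoin_Gdelta_lower F K (A : set X) :
  is_filter_base F -> fjoin F (Gdelta K) A ->
  exists P E, [/\ F P, Gdelta K E & P `&` E `<=` A].
Proof.
move=> [[P0 FP0] [_ FI]] [A0 [A1 [+ [+ ->]]]].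
case=> [FA0|GA0] [FA1|GA1].
- by exists (A0 `&` A1), setT; split; [exact: FI|exact: Gdelta_setT|move=> x []].
- by exists A0, A1; split.
- by exists A1, A0; rewrite setIC; split.
- by exists P0, (A0 `&` A1); split; [|exact: Gdelta_setI|move=> x []].
Qed.

Lemma countably_stable_fjoin F K :
  is_filter_base F -> countably_stable F -> countably_stable (fjoin F (Gdelta K)).
Proof.
move=> fbF csF S SJ cS.
have /choice [PG hPG] : forall A, exists PG : set X * set X, S A ->
    [/\ F PG.1, Gdelta K PG.2 & PG.1 `&` PG.2 `<=` A].
  move=> A; have [SA|nSA] := pselect (S A); last by exists (setT, setT).
  by have [P [E hPE]] := fjoin_Gdelta_lower fbF (SJ A SA); exists (P, E).
have [P0 [FP0 P0sub]] : exists P0, F P0 /\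
    P0 `<=` \bigcap_(P in (fun A => (PG A).1) @` S) P.
  apply: csF; last exact: card_le_trans (card_image_le _ _) cS.
  by move=> _ [A SA <-]; have [] := hPG A SA.
have GdG : Gdelta K (\bigcap_(A in S) (PG A).2).
  by apply: Gdelta_bigcap => // A /hPG [].
exists (P0 `&` \bigcap_(A in S) (PG A).2); split; first exact: fjoin_setI.
move=> x [P0x Gx] A SA; have [_ _ PGA] := hPG A SA.
by apply: PGA; split; [apply: P0sub P0x _ _; exists A|exact: Gx].
Qed.

Definition avoiding H : set (set X) :=
  [set U | open U /\ exists2 A, H A & A `&` U = set0].

Lemma avoiding_filter H K :
  is_filter_base H -> Filter (filter_from (avoiding H) (fun U => K `\` U)).
Proof.
move=> [[A0 HA0] [_ HI]]; apply: filter_from_filter.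
  by exists set0; split; [exact: open0|exists A0 => //; rewrite setI0].
move=> U1 U2 [oU1 [B1 HB1 B1U1]] [oU2 [B2 HB2 B2U2]].
exists (U1 `|` U2); last by move=> x [Kx nU]; split; split=> // ?; apply: nU; [left|right].
split; first exact: openU.
exists (B1 `&` B2); first exact: HI.
rewrite -subset0 => x [[B1x B2x] [U1x|U2x]].
- by rewrite -B1U1; split.
- by rewrite -B2U2; split.
Qed.

(* It is proper as soon as H contains every open set containing K: if K \ U
   were empty, U would be in H and so would the empty set A `&` U. *)
Lemma avoiding_proper H K :
  is_filter_base H -> (forall U, open U -> K `<=` U -> H U) ->
  ProperFilter (filter_from (avoiding H) (fun U => K `\` U)).
Proof.
move=> fbH HK; have [_ [Hn0 HI]] := fbH.
apply: filter_from_proper; first exact: avoiding_filter.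
move=> U [oU [A HA AU]]; apply: contrapT => /set0P/negP/negPn/eqP KU.
have KsubU : K `<=` U.
  by move=> x Kx; apply: contrapT => nUx; have : (K `\` U) x by []; rewrite KU.
by apply: Hn0; rewrite -AU; exact: HI (HK U oU KsubU).
Qed.

Lemma compact_adherence H K :
  compact K -> is_filter_base H -> (forall U, open U -> K `<=` U -> H U) ->
  K `&` ad H !=set0.
Proof.
move=> cK fbH HK; have [[A0 HA0] _] := fbH.
have [|x [Kx clx]] := cK _ (avoiding_proper fbH HK).
  by exists set0; [split; [exact: open0|exists A0 => //; rewrite setI0]|move=> y []].
exists x; split=> // A HA B Bx; apply: contrapT => nAB.
have AmissB : A `&` interior B = set0.
  by rewrite -subset0 => y [Ay /interior_subset By]; apply: nAB; exists y.
have [y [[_ nOy] Oy]] : (K `\` interior B) `&` interior B !=set0.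
  apply: clx; first by exists (interior B) => //; split; [exact: open_interior|exists A].
  exact: open_nbhs_nbhs (conj (@open_interior _ B) Bx).
exact: nOy Oy.
Qed.

Lemma total_fjoin_Gdelta F K : compact K -> total_fbase (fjoin F (Gdelta K)).
Proof.
move=> cK H fbH JH.
have HK U : open U -> K `<=` U -> H U.
  by move=> oU KU; apply: JH; apply: sub_fjoinr; exact: Gdelta_open.
by have [x [_ adx]] := compact_adherence cK fbH HK; exists x.
Qed.

End GdeltaJoin.

Theorem proposition2p2 (X : topologicalType) (F : set (set X)) (K : set X) :
  is_filter_base F -> countably_stable F -> compact K ->
  is_filter_base (fjoin F (Gdelta K)) ->
  total_fbase (fjoin F (Gdelta K)) /\ countably_stable (fjoin F (Gdelta K)).
Proof.
move=> fbF csF cK _; split; first exact: total_fjoin_Gdelta.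
exact: countably_stable_fjoin.
Qed.
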